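(* Let $G$ be a connected cubic graph on $n$ vertices. Then $M(G)\leq Z(G)\leq n/2+1$.
   Context: A cubic graph is a $3$-regular simple graph. For a graph $G$ on vertices $w_1,\dots,w_n$, $S(G)$ is the set of real symmetric $n\times n$ matrices $A$ such that for $s\neq t$, $a_{st}\neq 0$ if and only if $w_s$ and $w_t$ are adjacent (diagonal entries arbitrary); the maximum nullity $M(G)$ is the maximum nullity of a matrix in $S(G)$. Zero forcing: color each vertex black or white; if a black vertex has exactly one white neighbor, that neighbor is recolored black. A set $Z$ is a zero forcing set if starting with exactly $Z$ black and applying this rule repeatedly makes all vertices black; $Z(G)$ is the minimum size of a zero forcing set. *)

From HB Require Import structures.
From mathcomp Require Import all_boot all_order all_algebra.
From mathcomp Require Import boolp reals.
Set Implicit Arguments. Unset Strict Implicit. Unset Printing Implicit Defensive.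
Import Order.TTheory GRing.Theory Num.Theory.

Definition simple_graph (n : nat) (e : rel 'I_n) : Prop :=
  symmetric e /\ irreflexive e.

Definition cubic (n : nat) (e : rel 'I_n) : Prop :=
  forall v : 'I_n, #|[set w | e v w]| = 3.

Definition connected_graph (n : nat) (e : rel 'I_n) : Prop :=
  forall u v : 'I_n, connect e u v.

Definition in_SG (R : realType) (n : nat) (e : rel 'I_n) (A : 'M[R]_n) : Prop :=
  (A^T = A)%R /\ (forall s t : 'I_n, s != t -> (A s t != 0)%R = e s t).

Definition nullity (R : realType) (n : nat) (A : 'M[R]_n) : nat := n - \rank A.

(* M(G): maximum nullity of a matrix in S(G) (nullities lie in [0, n]) *)
Definition max_nullity (R : realType) (n : nat) (e : rel 'I_n) : nat :=
  \max_(k < n.+1 | `[< exists A : 'M[R]_n, in_SG e A /\ nullity A = k >]) (k : nat).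

Definition force_step (n : nat) (e : rel 'I_n) (B : {set 'I_n}) : {set 'I_n} :=
  B :|: [set w | (w \notin B) && [exists v in B, e v w &&
          [forall u, (e v u && (u \notin B)) ==> (u == w)]]].

(* the final colouring after repeatedly applying the rule (it stabilises
   after at most n rounds) *)
Definition zf_closure (n : nat) (e : rel 'I_n) (Z : {set 'I_n}) : {set 'I_n} :=
  iter n (force_step e) Z.

Definition zero_forcing_set (n : nat) (e : rel 'I_n) (Z : {set 'I_n}) : bool :=
  zf_closure e Z == [set: 'I_n].

(* Z(G): minimum size of a zero forcing set (setT is one, so bound n) *)
Definition zero_forcing_number (n : nat) (e : rel 'I_n) : nat :=
  \big[minn/n]_(Z : {set 'I_n} | zero_forcing_set e Z) #|Z|.

From HB Require Import structures.
From mathcomp Require Import all_boot all_order all_algebra.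
From mathcomp Require Import boolp reals.
From mathcomp Require Import zify.
Set Implicit Arguments. Unset Strict Implicit. Unset Printing Implicit Defensive.
Import Order.TTheory GRing.Theory Num.Theory.

(* Lower bound: if u A = 0 and u vanishes on Z, then u vanishes on every vertex
   forced from Z, because a force v -> w can be read off the v-th entry of u A;
   so for a zero forcing set Z the kernel of A injects into F^Z.
   Upper bound: start from an edge {v, a} and keep the invariant that every
   black vertex has a black neighbour. While some vertex is white, connectivity
   gives a black u with a white neighbour w; u cannot force, so in a cubic graph
   it has exactly one more white neighbour w'. Adding w to Z lets u force w', so
   each added vertex blackens at least two, whence 2 |Z| <= n + 2. *)

Section ZeroForcingClosure.
Variables (n : nat) (e : rel 'I_n).
Local Notation cl := (zf_closure e).

Lemma force_step_ext (B : {set 'I_n}) : B \subset force_step e B.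
Proof. exact: subsetUl. Qed.

Lemma force_stepS : {homo force_step e : X Y / X \subset Y}.
Proof.
move=> X Y sXY; apply/subsetP => w; rewrite !inE.
case/orP=> [/(subsetP sXY) -> // | /andP[_ /existsP[v /and3P[vX evw only_w]]]].
case: (w \in Y) => //=; apply/existsP; exists v.
rewrite (subsetP sXY v vX) evw /=; apply/forallP => u; apply/implyP => /andP[evu uY].
by apply: (implyP (forallP only_w u)); rewrite evu; apply: contra uY; apply: (subsetP sXY).
Qed.

Lemma iter_force_step_ext k (Z : {set 'I_n}) :
  Z \subset iter k (force_step e) Z.
Proof. by elim: k => //= k IH; apply: subset_trans IH (force_step_ext _). Qed.

Lemma zf_closure_ext (Z : {set 'I_n}) : Z \subset cl Z.
Proof. exact: iter_force_step_ext. Qed.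

Lemma zf_closure_min (Z X : {set 'I_n}) :
  Z \subset X -> force_step e X \subset X -> cl Z \subset X.
Proof.
move=> sZX fX; suff iter_sub k : iter k (force_step e) Z \subset X by apply: iter_sub.
by elim: k => //= k IH; apply: subset_trans (force_stepS IH) fX.
Qed.

(* [iter k.+1 (force_step e) Z] is the [k.+1]-st iterate of the monotone map
   [X |-> force_step e (Z :|: X)] from [set0], so [fixsetK] applies. *)
Lemma force_step_closure (Z : {set 'I_n}) : force_step e (cl Z) = cl Z.
Proof.
have [n0 | n_gt0] := posnP n.
  by apply/setP => x; have := ltn_ord x; lia.
pose F X := force_step e (Z :|: X).
have homoF : {homo F : X Y / X \subset Y}.
  by move=> X Y sXY; apply: force_stepS; rewrite setUS.
have iterF k : 0 < k -> iter k F set0 = iter k (force_step e) Z.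
  case: k => // k _; elim: k => [|k IH]; first by rewrite /F /= setU0.
  by rewrite iterS IH /F (setUidPr (iter_force_step_ext _ _)).
have := fixsetK homoF; rewrite /fixset card_ord iterF //.
by rewrite /F (setUidPr (iter_force_step_ext _ _)).
Qed.

Lemma zf_closureS : {homo cl : X Y / X \subset Y}.
Proof.
move=> X Y sXY; apply: zf_closure_min; last by rewrite force_step_closure.
exact: subset_trans sXY (zf_closure_ext Y).
Qed.

Lemma zf_closure_forced (Z : {set 'I_n}) v w :
  v \in cl Z -> e v w -> (forall u, e v u -> u \notin cl Z -> u = w) -> w \in cl Z.
Proof.
move=> vC evw only_w; rewrite -force_step_closure !inE.
case: (w \in cl Z) => //=; apply/existsP; exists v; rewrite vC evw /=.
by apply/forallP => u; apply/implyP => /andP[evu uC]; rewrite (only_w u).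
Qed.

Lemma zf_closure_second_white (Z : {set 'I_n}) v w :
  v \in cl Z -> e v w -> w \notin cl Z ->
  exists w', [/\ e v w', w' \notin cl Z & w' != w].
Proof.
move=> vC evw wC.
have /existsP[w' /and3P[evw' w'C w'w]] :
    [exists w', [&& e v w', w' \notin cl Z & w' != w]].
  apply: contraT => /existsPn only_w; case/negP: wC; apply: zf_closure_forced vC evw _.
  by move=> u evu uC; apply/eqP; have := only_w u; rewrite evu uC /= negbK.
by exists w'.
Qed.

Lemma zero_forcing_setT : zero_forcing_set e setT.
Proof. by rewrite /zero_forcing_set eqEsubset subsetT zf_closure_ext. Qed.

Lemma zero_forcing_number_min (Z : {set 'I_n}) :
  zero_forcing_set e Z -> zero_forcing_number e <= #|Z|.
Proof. exact: (@bigmin_le_cond _ nat). Qed.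

Definition has_nbr_in (C : {set 'I_n}) (x : 'I_n) := [exists y in C, e x y].

Hypothesis sym_e : symmetric e.

Lemma zf_closure_has_nbr (Z : {set 'I_n}) :
  {in Z, forall z, has_nbr_in (cl Z) z} -> {in cl Z, forall x, has_nbr_in (cl Z) x}.
Proof.
move=> nbrZ; pose Y := [set x in cl Z | has_nbr_in (cl Z) x].
have sYC : Y \subset cl Z by apply/subsetP => x; rewrite inE => /andP[].
suff /subsetP sCY : cl Z \subset Y by move=> x /sCY; rewrite inE => /andP[].
apply: zf_closure_min.
  by apply/subsetP => z zZ; rewrite inE (subsetP (zf_closure_ext Z)) ?nbrZ.
apply/subsetP => w fYw.
have wC : w \in cl Z by rewrite -force_step_closure (subsetP (force_stepS sYC)).
move: fYw; rewrite !inE => /orP[// | /andP[_ /existsP[v /and3P[vY evw _]]]].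
by rewrite wC; apply/existsP; exists v; rewrite (subsetP sYC) // sym_e.
Qed.

Hypothesis connected_e : connected_graph e.

Lemma boundary_edge (C : {set 'I_n}) x0 :
  x0 \in C -> C != setT -> exists u w, [/\ u \in C, w \notin C & e u w].
Proof.
move=> x0C CnT.
have /existsP[u /andP[uC /existsP[w /andP[wC euw]]]] :
    [exists u in C, exists w, (w \notin C) && e u w].
  apply: contraNT CnT => /existsPn no_edge; apply/eqP/setP => y; rewrite inE.
  suff closedC : closed e (mem C).
    by rewrite -(closed_connect closedC (connected_e x0 y)).
  have no_exit a b : a \in C -> e a b -> b \in C.
    move=> aC eab; apply: contraT => bC; have := no_edge a; rewrite aC /=.
    by move/existsPn/(_ b); rewrite bC eab.
  move=> a b eab; apply/idP/idP => [/no_exit|]; first exact.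
  by move/no_exit; apply; rewrite sym_e.
by exists u, w.
Qed.

End ZeroForcingClosure.

Section CubicUpperBound.
Variables (n : nat) (e : rel 'I_n).
Hypotheses (sym_e : symmetric e) (cubic_e : cubic e) (connected_e : connected_graph e).
Local Notation cl := (zf_closure e).

Lemma cubic_nbrsE u b w w' :
  e u b -> e u w -> e u w' -> b != w -> b != w' -> w != w' ->
  [set x | e u x] = b |: [set w; w'].
Proof.
move=> eub euw euw' bw bw' ww'; apply/esym/eqP; rewrite eqEcard cubic_e.
rewrite cardsU1 cards2 !inE negb_or bw bw' ww'; apply/andP; split=> //.
by apply/subsetP => x; rewrite !inE => /or3P[] /eqP->.
Qed.

Lemma zf_closure_add_grows (Z : {set 'I_n}) x0 :
  x0 \in Z -> {in Z, forall z, has_nbr_in e (cl Z) z} -> cl Z != setT ->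
  exists w, {in w |: Z, forall z, has_nbr_in e (cl (w |: Z)) z} /\
            #|cl Z| + 2 <= #|cl (w |: Z)|.
Proof.
move=> x0Z nbrZ CnT.
have x0C := subsetP (zf_closure_ext e Z) x0 x0Z.
have [u [w [uC wC euw]]] := boundary_edge sym_e connected_e x0C CnT.
have /existsP[b /andP[bC eub]] := zf_closure_has_nbr sym_e nbrZ uC.
have [w' [euw' w'C w'w]] := zf_closure_second_white uC euw wC.
have sCC' : cl Z \subset cl (w |: Z) by apply: zf_closureS; apply: subsetUr.
have wC' : w \in cl (w |: Z) by rewrite (subsetP (zf_closure_ext e _)) // setU11.
have w'C' : w' \in cl (w |: Z).
  apply: (zf_closure_forced (subsetP sCC' u uC) euw') => x eux xC'.
  have bw : b != w by apply: contraNneq wC => <-.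
  have bw' : b != w' by apply: contraNneq w'C => <-.
  have ww' : w != w' by rewrite eq_sym.
  have /setP/(_ x) := cubic_nbrsE eub euw euw' bw bw' ww'.
  rewrite !inE eux => /esym/or3P[] /eqP xE //; move: xC'.
    by rewrite xE (subsetP sCC').
  by rewrite xE wC'.
exists w; split.
  move=> z; rewrite !inE => /predU1P[-> | zZ].
    by apply/existsP; exists u; rewrite (subsetP sCC') // sym_e.
  have /existsP[y /andP[yC ezy]] := nbrZ z zZ.
  by apply/existsP; exists y; rewrite (subsetP sCC').
have : w |: (w' |: cl Z) \subset cl (w |: Z).
  by apply/subsetP => y; rewrite !inE => /predU1P[-> | /predU1P[-> | /(subsetP sCC')]].
move=> /subset_leq_card; rewrite !cardsU1 !inE negb_or eq_sym w'w (negbTE wC) w'C.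
by rewrite addn2.
Qed.

Lemma exists_small_zero_forcing_set (Z : {set 'I_n}) x0 :
  x0 \in Z -> {in Z, forall z, has_nbr_in e (cl Z) z} -> 2 * #|Z| <= #|cl Z| + 2 ->
  exists2 Z', zero_forcing_set e Z' & 2 * #|Z'| <= n + 2.
Proof.
have [k] := ubnP (n - #|cl Z|); elim: k Z => // k IH Z ltCk x0Z nbrZ leZC.
have [CT | CnT] := eqVneq (cl Z) setT.
  by exists Z; [apply/eqP | rewrite CT cardsT card_ord in leZC].
have [w [nbrZ' growC]] := zf_closure_add_grows x0Z nbrZ CnT.
have leC'n : #|cl (w |: Z)| <= n by rewrite -[X in _ <= X]card_ord max_card.
apply: (IH (w |: Z)) => //; first by lia.
  by rewrite setU1r.
have := leq_b1 (w \notin Z); rewrite cardsU1; lia.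
Qed.

Lemma zero_forcing_number_cubic : 2 * zero_forcing_number e <= n + 2.
Proof.
have [v _ | no_vertex] := pickP (@predT 'I_n); last first.
  have := zero_forcing_number_min (zero_forcing_setT e).
  by rewrite cardsT (eq_card0 no_vertex) leqn0 => /eqP ->.
have /card_gt0P[a] : 0 < #|[set w | e v w]| by rewrite cubic_e.
rewrite inE => eva.
have [Z zfZ leZ] : exists2 Z, zero_forcing_set e Z & 2 * #|Z| <= n + 2.
  apply: (@exists_small_zero_forcing_set [set v; a] v).
  - by rewrite !inE eqxx.
  - move=> z; rewrite !inE => /orP[] /eqP-> /=; apply/existsP.
      by exists a; rewrite eva (subsetP (zf_closure_ext e _)) // !inE eqxx orbT.
    by exists v; rewrite sym_e eva (subsetP (zf_closure_ext e _)) // !inE eqxx.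
  - have := subset_leq_card (zf_closure_ext e [set v; a]).
    by rewrite cards2; case: (v != a); lia.
by apply: leq_trans leZ; rewrite leq_mul2l zero_forcing_number_min ?orbT.
Qed.

End CubicUpperBound.

Section NullityBound.
Local Open Scope ring_scope.
Variables (F : fieldType) (n : nat) (e : rel 'I_n) (A : 'M[F]_n).
Hypothesis sym_e : symmetric e.
Hypothesis A_pattern : forall s t, s != t -> (A s t != 0) = e s t.

Lemma left_kernel_vanishes_on_zf_closure (u : 'rV[F]_n) (Z : {set 'I_n}) :
  u *m A = 0 -> {in Z, forall j, u 0 j = 0} ->
  {in zf_closure e Z, forall j, u 0 j = 0}.
Proof.
move=> uA0 uZ; pose X := [set j | u 0 j == 0].
suff /subsetP sCX : zf_closure e Z \subset X by move=> j /sCX; rewrite inE => /eqP.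
apply: zf_closure_min; first by apply/subsetP => j /uZ; rewrite inE => ->.
apply/subsetP => w; rewrite inE => /orP[// | ].
rewrite inE => /andP[wX /existsP[v /and3P[vX evw /forallP only_w]]].
have wv : w != v by apply: contraNneq wX => ->.
have /eqP := congr1 (fun M : 'rV[F]_n => M 0 v) uA0.
rewrite !mxE (bigD1 w) //= big1 ?addr0.
  by rewrite mulf_eq0 -[A w v == 0]negbK (A_pattern wv) sym_e evw orbF inE.
move=> i iw; have [-> | iv] := eqVneq i v.
  by move: vX; rewrite inE => /eqP->; rewrite mul0r.
have [evi | nevi] := boolP (e v i).
  have : i \in X by apply: contraT => iX; rewrite -(negbTE iw) (implyP (only_w i)) // evi.
  by rewrite inE => /eqP->; rewrite mul0r.
by move/negbTE: nevi; rewrite -sym_e -(A_pattern iv) => /negbFE/eqP->; rewrite mulr0.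
Qed.

Lemma corank_le_zero_forcing_set (Z : {set 'I_n}) :
  zero_forcing_set e Z -> (n - \rank A <= #|Z|)%N.
Proof.
move=> /eqP zfZ.
pose S : 'M[F]_(n, #|Z|) := \matrix_(i, k) (i == enum_val k)%:R.
have vanish_S (u : 'rV[F]_n) : u *m S = 0 -> {in Z, forall j, u 0 j = 0}.
  move=> uS0 j jZ; have := congr1 (fun M : 'rV[F]_#|Z| => M 0 (enum_rank_in jZ j)) uS0.
  rewrite !mxE (bigD1 j) //= big1 ?addr0.
    by rewrite !mxE enum_rankK_in // eqxx mulr1.
  by move=> i ij; rewrite !mxE enum_rankK_in // (negbTE ij) mulr0.
have capK0 : \rank (kermx A :&: kermx S)%MS = 0%N.
  apply/eqP; rewrite mxrank_eq0; apply/eqP/row_matrixP => i; rewrite row0.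
  have := row_sub i (kermx A :&: kermx S)%MS.
  rewrite sub_capmx => /andP[/sub_kermxP uA0 /sub_kermxP uS0].
  apply/rowP => j; rewrite [RHS]mxE.
  by apply: (left_kernel_vanishes_on_zf_closure uA0 (vanish_S _ uS0)); rewrite zfZ inE.
have := mxrank_mul_ker (kermx A) S; rewrite capK0 addn0 mxrank_ker => <-.
exact: rank_leq_col.
Qed.

End NullityBound.

Lemma max_nullity_le_zero_forcing_number (R : realType) n (e : rel 'I_n) :
  symmetric e -> max_nullity R e <= zero_forcing_number e.
Proof.
move=> sym_e; apply/bigmax_leqP => k /asboolP[A [[_ A_e] <-]].
apply/(@bigmin_geP _ nat); split=> [|Z]; first exact: leq_subr.
exact: corank_le_zero_forcing_set.
Qed.

Theorem mainTheorem6 (R : realType) (n : nat) (e : rel 'I_n) :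
  simple_graph e -> cubic e -> connected_graph e ->
  max_nullity R e <= zero_forcing_number e /\
  2 * zero_forcing_number e <= n + 2.
Proof.
move=> [sym_e _] cubic_e connected_e; split.
  exact: max_nullity_le_zero_forcing_number.
exact: zero_forcing_number_cubic.
Qed.
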